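(* Let $\rho^{ab}$ be a state on $\mathcal H_a\otimes\mathcal H_b$, $\{|i\rangle\}_{i=1}^n$ an orthonormal basis of $\mathcal H_a$, $\eta_i=\mathrm{Tr}[(|i\rangle\langle i|\otimes I^b)\rho^{ab}]$ and (for $\eta_i>0$) $\omega_i=\eta_i^{-1}\sqrt{\rho^{ab}}(|i\rangle\langle i|\otimes I^b)\sqrt{\rho^{ab}}$. Then $$C^a_A(\rho^{ab})=P^{lsm}_E(\{\omega_i,\eta_i\}_{i=1}^n).$$
   Context: $C^a_A(\rho^{ab})=\min_{\sigma}(1-A^2(\rho^{ab},\sigma))$ over partial incoherent states $\sigma=\sum_ip_i|i\rangle\langle i|\otimes\sigma_i$, with $A(\rho,\sigma)=\mathrm{Tr}(\sqrt\rho\sqrt\sigma)$. For an ensemble $\{\rho_i,\eta_i\}$, let $\rho_{out}=\sum_i\eta_i\rho_i$ and $\rho_{out}^{-1/2}=\sum_k\lambda_k^{-1/2}P_k$ for the spectral decomposition $\rho_{out}=\sum_k\lambda_kP_k$ (sum over $\lambda_k>0$). The least square measurement (LSM) is $M^{lsm}_i=\eta_i\rho_{out}^{-1/2}\rho_i\rho_{out}^{-1/2}$, and its error probability is $P^{lsm}_E(\{\rho_i,\eta_i\})=1-\sum_i\eta_i\mathrm{Tr}(M^{lsm}_i\rho_i)$. *)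

(* Finite-dimensional quantum states as complex matrices over
   an arbitrary numClosedFieldType C (e.g. algC), using mathcomp's spectral
   theorem (spectral.v) for the functional calculus. *)
From HB Require Import structures.
From mathcomp Require Import all_boot all_order all_algebra.
Set Implicit Arguments. Unset Strict Implicit. Unset Printing Implicit Defensive.
Import Order.TTheory GRing.Theory Num.Theory Num.Def.
Local Open Scope ring_scope.

Section QDefs.
Variable C : numClosedFieldType.

Definition adjmx (p q : nat) (M : 'M[C]_(p, q)) : 'M[C]_(q, p) := map_mx conjC M^T.

Definition psdmx (p : nat) (A : 'M[C]_p) : Prop :=
  adjmx A = A /\ forall v : 'cV[C]_p, 0 <= (adjmx v *m A *m v) 0 0.

Definition statemx (p : nat) (A : 'M[C]_p) : Prop := psdmx A /\ \tr A = 1.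

(* functional calculus via the spectral decomposition A = P^-1 diag(d) P
   (P unitary), valid for normal (in particular hermitian) A *)
Definition mxfun (f : C -> C) (p : nat) (A : 'M[C]_p) : 'M[C]_p :=
  invmx (spectralmx A) *m diag_mx (map_mx f (spectral_diag A)) *m spectralmx A.

Definition sqrtmx (p : nat) (A : 'M[C]_p) : 'M[C]_p := mxfun (fun x : C => sqrtC x) A.

(* A^{-1/2} = sum_{lambda_k > 0} lambda_k^{-1/2} P_k  (generalized inverse) *)
Definition invsqrtmx (p : nat) (A : 'M[C]_p) : 'M[C]_p :=
  mxfun (fun x => if 0 < x then (sqrtC x)^-1 else 0) A.

(* Kronecker (tensor) product; index mxvec_index i j of 'I_(n*m) ~ |i>|j> *)
Definition kronmx (n m : nat) (A : 'M[C]_n) (B : 'M[C]_m) : 'M[C]_(n * m) :=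
  \matrix_(k < n * m, l < n * m)
    let ij := enum_val (cast_ord (esym (mxvec_cast n m)) k) in
    let ij' := enum_val (cast_ord (esym (mxvec_cast n m)) l) in
    A ij.1 ij'.1 * B ij.2 ij'.2.

Definition affinity (p : nat) (rho sigma : 'M[C]_p) : C :=
  \tr (sqrtmx rho *m sqrtmx sigma).

(* |i><i| for the orthonormal basis given by the columns of a unitary U *)
Definition basis_proj (n : nat) (U : 'M[C]_n) (i : 'I_n) : 'M[C]_n :=
  col i U *m adjmx (col i U).

Definition partial_incoherent (n m : nat) (U : 'M[C]_n) (sigma : 'M[C]_(n * m))
  : Prop :=
  exists (pr : 'I_n -> C) (sig : 'I_n -> 'M[C]_m),
    (forall i, 0 <= pr i) /\ \sum_i pr i = 1 /\ (forall i, statemx (sig i)) /\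
    sigma = \sum_i pr i *: kronmx (basis_proj U i) (sig i).

(* "C^a_A(rho) = c": c is the minimum of 1 - A^2(rho, sigma) over partial
   incoherent sigma (attained, and a lower bound). *)
Definition cohA_is (n m : nat) (U : 'M[C]_n) (rho : 'M[C]_(n * m)) (c : C)
  : Prop :=
  (exists sigma, @partial_incoherent n m U sigma /\ c = 1 - (affinity rho sigma) ^+ 2)
  /\ (forall sigma, @partial_incoherent n m U sigma ->
        c <= 1 - (affinity rho sigma) ^+ 2).

Definition lsm_error (k p : nat) (rhos : 'I_k -> 'M[C]_p) (etas : 'I_k -> C) : C :=
  let rho_out := \sum_i etas i *: rhos i in
  let R := invsqrtmx rho_out in
  let M := fun i => etas i *: (R *m rhos i *m R) in
  1 - \sum_i etas i * \tr (M i *m rhos i).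

Definition eta_of (n m : nat) (U : 'M[C]_n) (rho : 'M[C]_(n * m)) (i : 'I_n) : C :=
  \tr (kronmx (basis_proj U i) (1%:M : 'M[C]_m) *m rho).

(* omega_i = eta_i^-1 sqrt(rho) (|i><i| (x) I) sqrt(rho)  (= 0 when eta_i = 0,
   in which case it carries zero weight) *)
Definition omega_of (n m : nat) (U : 'M[C]_n) (rho : 'M[C]_(n * m)) (i : 'I_n)
  : 'M[C]_(n * m) :=
  (@eta_of n m U rho i)^-1 *:
    (sqrtmx rho *m kronmx (basis_proj U i) (1%:M : 'M[C]_m) *m sqrtmx rho).

End QDefs.

Arguments partial_incoherent {C n} m U sigma.
Arguments cohA_is {C n} m U rho c.
Arguments eta_of {C n} m U rho i.
Arguments omega_of {C n} m U rho i.

From HB Require Import structures.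
From mathcomp Require Import all_boot all_order all_algebra.
From mathcomp Require Import ring.
Set Implicit Arguments. Unset Strict Implicit. Unset Printing Implicit Defensive.
Import Order.TTheory GRing.Theory Num.Theory Num.Def.
Local Open Scope ring_scope.

(* Write S = sqrt(rho) and P_i = |i><i| (x) I.  Then eta_i omega_i = S P_i S,
   so the ensemble averages to S S = rho; since S rho^{-1/2} S = S, the LSM
   error is 1 - G with G = sum_i Tr(S P_i S P_i).  With the pinching
   X = sum_i P_i S P_i one has Tr(X X) = Tr(S X) = G, and:
   - lower bound: if sigma is partial incoherent then tau = sqrt(sigma)
     commutes with every P_i, so A(rho, sigma) = Tr(S tau) = Tr(X tau), and
     the Cauchy-Schwarz inequality for the Hilbert-Schmidt product gives
     A^2 <= Tr(X X) Tr(tau tau) = G;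
   - attainment: sigma_opt = X X / G is partial incoherent (its blocks are the
     squares of the compressions of S) and sqrt(sigma_opt) = X / sqrt(G), hence
     A(rho, sigma_opt)^2 = Tr(S X)^2 / G = G. *)

Section MatrixAnalysis.
Variable C : numClosedFieldType.
Implicit Types (p q r : nat).

Lemma adjmxM p q r (A : 'M[C]_(p, q)) (B : 'M[C]_(q, r)) :
  adjmx (A *m B) = adjmx B *m adjmx A.
Proof. by rewrite /adjmx trmx_mul map_mxM. Qed.

Lemma adjmxK p q (A : 'M[C]_(p, q)) : adjmx (adjmx A) = A.
Proof. exact: trmxCK. Qed.

Lemma adjmxD p q (A B : 'M[C]_(p, q)) : adjmx (A + B) = adjmx A + adjmx B.
Proof. by rewrite /adjmx linearD /= map_mxD. Qed.

Lemma adjmxN p q (A : 'M[C]_(p, q)) : adjmx (- A) = - adjmx A.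
Proof. by rewrite /adjmx linearN /= map_mxN. Qed.

Lemma adjmxZ p q c (A : 'M[C]_(p, q)) : adjmx (c *: A) = c^* *: adjmx A.
Proof. by rewrite /adjmx linearZ /= map_mxZ. Qed.

Lemma adjmx0 p q : adjmx (0 : 'M[C]_(p, q)) = 0.
Proof. by rewrite /adjmx trmx0 map_mx0. Qed.

Lemma adjmx_sum p q (I : finType) (F : I -> 'M[C]_(p, q)) :
  adjmx (\sum_i F i) = \sum_i adjmx (F i).
Proof.
apply/matrixP => a b; rewrite !mxE !summxE rmorph_sum; apply: eq_bigr => i _.
by rewrite !mxE.
Qed.

Lemma adj_diag p (a : 'rV[C]_p) : adjmx (diag_mx a) = diag_mx (map_mx conjC a).
Proof. by rewrite /adjmx tr_diag_mx map_diag_mx. Qed.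

Lemma tr_adjmx p (A : 'M[C]_p) : \tr (adjmx A) = (\tr A)^*.
Proof. by rewrite /mxtrace rmorph_sum; apply: eq_bigr => i _; rewrite !mxE. Qed.

Lemma tr_sum p (I : finType) (F : I -> 'M[C]_p) : \tr (\sum_i F i) = \sum_i \tr (F i).
Proof. exact: raddf_sum. Qed.

Lemma frobE p q (A : 'M[C]_(p, q)) :
  \tr (adjmx A *m A) = \sum_i \sum_j (A j i)^* * A j i.
Proof. by apply: eq_bigr => i _; rewrite mxE; apply: eq_bigr => j _; rewrite !mxE. Qed.

Lemma frob_ge0 p q (A : 'M[C]_(p, q)) : 0 <= \tr (adjmx A *m A).
Proof.
rewrite frobE; apply: sumr_ge0 => i _; apply: sumr_ge0 => j _.
by rewrite mulrC mul_conjC_ge0.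
Qed.

Lemma frob_eq0 p q (A : 'M[C]_(p, q)) : \tr (adjmx A *m A) = 0 -> A = 0.
Proof.
have entry_ge0 i j : 0 <= (A j i)^* * A j i by rewrite mulrC mul_conjC_ge0.
rewrite frobE => sum0; apply/matrixP => j i; rewrite mxE.
have col0 := psumr_eq0P (fun i _ => sumr_ge0 _ (fun j _ => entry_ge0 i j)) sum0 (i := i) isT.
have := psumr_eq0P (fun j _ => entry_ge0 i j) col0 (i := j) isT.
by move/eqP; rewrite mulrC mul_conjC_eq0 => /eqP.
Qed.

Lemma tr_sqrB p (A T : 'M[C]_p) a :
  \tr ((A - a *: T) *m (A - a *: T)) =
  \tr (A *m A) - a * \tr (A *m T) - a * \tr (T *m A) + a * a * \tr (T *m T).
Proof.
rewrite mulmxBl !mulmxBr -!scalemxAl -!scalemxAr !linearB /= !mxtraceZ.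
by ring.
Qed.

(* Cauchy-Schwarz for hermitian matrices: Tr(A T)^2 <= Tr(A A) Tr(T T),
   in the normalised case Tr(T T) = 1 that the lower bound needs. *)
Lemma tr_cauchy_schwarz p (A T : 'M[C]_p) :
  adjmx A = A -> adjmx T = T -> \tr (T *m T) = 1 ->
  (\tr (A *m T)) ^+ 2 <= \tr (A *m A).
Proof.
move=> hA hT tT; set a := \tr (A *m T).
have a_real : a^* = a by rewrite -tr_adjmx adjmxM hA hT mxtrace_mulC.
have hZ : adjmx (A - a *: T) = A - a *: T by rewrite adjmxD adjmxN adjmxZ a_real hA hT.
have := frob_ge0 (A - a *: T); rewrite hZ tr_sqrB (mxtrace_mulC T A) -/a tT.
have -> : \tr (A *m A) - a * a - a * a + a * a * 1 = \tr (A *m A) - a ^+ 2.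
  by rewrite expr2; ring.
by rewrite subr_ge0.
Qed.

Definition herm p (A : 'M[C]_p) := adjmx A = A.

Lemma psd_herm p (A : 'M[C]_p) : psdmx A -> herm A.
Proof. by case. Qed.

Lemma psd_gram p q (B : 'M[C]_(p, q)) : psdmx (adjmx B *m B).
Proof.
split; first by rewrite adjmxM adjmxK.
move=> v; rewrite !mulmxA -adjmxM -mulmxA.
have -> : forall w : 'M[C]_(1, 1), w 0 0 = \tr w by move=> w; rewrite /mxtrace big_ord1.
exact: frob_ge0.
Qed.

Lemma psd_sandwich p q (B : 'M[C]_(p, q)) (M : 'M[C]_q) :
  psdmx M -> psdmx (B *m M *m adjmx B).
Proof.
case=> hM pM; split; first by rewrite !adjmxM adjmxK hM mulmxA.
by move=> v; have := pM (adjmx B *m v); rewrite adjmxM adjmxK !mulmxA.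
Qed.

Lemma psd_scale p c (A : 'M[C]_p) : 0 <= c -> psdmx A -> psdmx (c *: A).
Proof.
move=> c0 [hA pA]; split; first by rewrite adjmxZ hA geC0_conj.
by move=> v; rewrite -scalemxAr -scalemxAl mxE; apply: mulr_ge0.
Qed.

Lemma psd_sum p (I : finType) (F : I -> 'M[C]_p) :
  (forall i, psdmx (F i)) -> psdmx (\sum_i F i).
Proof.
move=> psdF; apply: (big_ind (@psdmx C p)) => //.
- by split; [rewrite adjmx0 | move=> v; rewrite mulmx0 mul0mx mxE].
- move=> A B [hA pA] [hB pB]; split; first by rewrite adjmxD hA hB.
  by move=> v; rewrite mulmxDr mulmxDl mxE; apply: addr_ge0.
Qed.

Lemma psd_diag p (c : 'rV[C]_p) : (forall k, 0 <= c 0 k) -> psdmx (diag_mx c).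
Proof.
move=> c_ge0; split.
  by rewrite adj_diag; congr diag_mx; apply/matrixP => i j; rewrite !mxE [i]ord1 geC0_conj.
move=> v; rewrite mul_mx_diag !mxE; apply: sumr_ge0 => j _; rewrite !mxE.
by rewrite mulrAC mulr_ge0 // mulrC mul_conjC_ge0.
Qed.

Lemma unitary_adjK p (W : 'M[C]_p) : W \is unitarymx -> W *m adjmx W = 1%:M.
Proof. by move/unitarymxP. Qed.

Lemma unitary_adjKV p (W : 'M[C]_p) : W \is unitarymx -> adjmx W *m W = 1%:M.
Proof. by move/unitarymxP/mulmx1C. Qed.

Lemma mxfunE f p (A : 'M[C]_p) :
  mxfun f A = adjmx (spectralmx A) *m diag_mx (map_mx f (spectral_diag A)) *m spectralmx A.
Proof. by rewrite /mxfun invmx_unitary ?spectral_unitarymx. Qed.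

Lemma specE p (A : 'M[C]_p) : herm A ->
  A = adjmx (spectralmx A) *m diag_mx (spectral_diag A) *m spectralmx A.
Proof.
move=> hA; have /hermitian_normalmx/orthomx_spectralP E : A \is hermsymmx.
  by apply/is_hermitianmxP; rewrite expr0 scale1r.
by rewrite {1}E invmx_unitary ?spectral_unitarymx.
Qed.

Lemma spec_diagE p (A : 'M[C]_p) : herm A ->
  diag_mx (spectral_diag A) = spectralmx A *m A *m adjmx (spectralmx A).
Proof.
move=> hA; have uV := spectral_unitarymx A.
by rewrite {3}(specE hA) !mulmxA unitary_adjK // mul1mx -mulmxA unitary_adjK // mulmx1.
Qed.

Lemma diag_mul p (a b : 'rV[C]_p) :
  diag_mx a *m diag_mx b = diag_mx (\row_k (a 0 k * b 0 k)).
Proof.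
apply/matrixP => i j; rewrite mul_diag_mx !mxE.
by case: (eqVneq i j) => [->|]; rewrite ?mulr1n ?mulr0n ?mulr0.
Qed.

Lemma conj_mul p (W : 'M[C]_p) (D1 D2 : 'M[C]_p) : W \is unitarymx ->
  (adjmx W *m D1 *m W) *m (adjmx W *m D2 *m W) = adjmx W *m (D1 *m D2) *m W.
Proof.
move=> uW; rewrite -!mulmxA; congr (_ *m _); rewrite !mulmxA.
by rewrite -(mulmxA _ W) unitary_adjK // mulmx1.
Qed.

Lemma mxfunM f g p (A : 'M[C]_p) :
  mxfun f A *m mxfun g A = mxfun (fun x => f x * g x) A.
Proof.
rewrite !mxfunE conj_mul ?spectral_unitarymx // diag_mul.
by congr (_ *m _ *m _); congr diag_mx; apply/matrixP => i j; rewrite !mxE [i]ord1.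
Qed.

Lemma mxfun_eq f g p (A : 'M[C]_p) :
  (forall k, f (spectral_diag A 0 k) = g (spectral_diag A 0 k)) -> mxfun f A = mxfun g A.
Proof.
move=> fg; rewrite !mxfunE; congr (_ *m _ *m _); congr diag_mx.
by apply/matrixP => i j; rewrite !mxE [i]ord1 fg.
Qed.

Lemma mxfun_id p (A : 'M[C]_p) : herm A -> mxfun id A = A.
Proof. by move=> hA; rewrite mxfunE map_mx_id // -specE. Qed.

(* Eigenvalues of a PSD matrix are Rayleigh quotients, hence nonnegative. *)
Lemma psd_eig p (A : 'M[C]_p) (k : 'I_p) : psdmx A -> 0 <= spectral_diag A 0 k.
Proof.
case=> hA pA; set w := adjmx (row k (spectralmx A)).
have -> : spectral_diag A 0 k = (adjmx w *m A *m w) 0 0.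
  rewrite (_ : spectral_diag A 0 k = diag_mx (spectral_diag A) k k); last first.
    by rewrite mxE eqxx mulr1n.
  rewrite spec_diagE // /w adjmxK !mxE; apply: eq_bigr => j _; rewrite !mxE.
  by congr (_ * _); apply: eq_bigr => a _; rewrite !mxE.
exact: pA.
Qed.

Lemma psd_mxfun f p (A : 'M[C]_p) :
  (forall k, 0 <= f (spectral_diag A 0 k)) -> psdmx (mxfun f A).
Proof.
move=> f_ge0; rewrite mxfunE -{2}(adjmxK (spectralmx A)); apply: psd_sandwich.
by apply: psd_diag => k; rewrite mxE.
Qed.

Lemma psd_sqrt p (A : 'M[C]_p) : psdmx A -> psdmx (sqrtmx A).
Proof. by move=> pA; apply: psd_mxfun => k; rewrite sqrtC_ge0 psd_eig. Qed.

Lemma sqrt_sqr p (A : 'M[C]_p) : psdmx A -> sqrtmx A *m sqrtmx A = A.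
Proof.
move=> pA; rewrite /sqrtmx mxfunM -{2}(mxfun_id (psd_herm pA)).
by apply: mxfun_eq => k; rewrite -expr2 sqrtCK.
Qed.

(* A PSD matrix with zero trace vanishes: Tr A = Tr(sqrt(A)^* sqrt(A)). *)
Lemma psd_tr0 p (A : 'M[C]_p) : psdmx A -> \tr A = 0 -> A = 0.
Proof.
move=> pA t0; have E := sqrt_sqr pA; have [hR _] := psd_sqrt pA.
have R0 : sqrtmx A = 0 by apply: frob_eq0; rewrite hR E.
by rewrite -E R0 mul0mx.
Qed.

Lemma sqrt_invsqrt p (A : 'M[C]_p) : psdmx A ->
  sqrtmx A *m invsqrtmx A *m sqrtmx A = sqrtmx A.
Proof.
move=> pA; rewrite /sqrtmx /invsqrtmx !mxfunM; apply: mxfun_eq => k.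
have := psd_eig k pA; set x := spectral_diag A 0 k => x0.
case: ifP => [xp|]; first by rewrite mulfV ?mul1r // sqrtC_eq0 gt_eqF.
by rewrite lt_def x0 andbT => /negbFE/eqP->; rewrite sqrtC0 !mul0r.
Qed.

Lemma intertwine p (Q : 'M[C]_p) (a b a' b' : 'rV[C]_p) :
  diag_mx a *m Q = Q *m diag_mx b ->
  (forall j k, a 0 j = b 0 k -> a' 0 j = b' 0 k) ->
  diag_mx a' *m Q = Q *m diag_mx b'.
Proof.
move=> E ab; apply/matrixP => j k; have /matrixP/(_ j k) := E.
rewrite !mul_diag_mx !mul_mx_diag !mxE.
have [->|nz] := eqVneq (Q j k) 0; first by rewrite !mulr0 !mul0r.
by rewrite mulrC => /(mulfI nz) /ab ->; rewrite mulrC.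
Qed.

Lemma mxfun_comm f p (A M : 'M[C]_p) : herm A -> M *m A = A *m M ->
  M *m mxfun f A = mxfun f A *m M.
Proof.
move=> hA MA; set V := spectralmx A; set d := spectral_diag A.
have uV : V \is unitarymx by apply: spectral_unitarymx.
have VV : adjmx V *m V = 1%:M by apply: unitary_adjKV.
set Q := V *m M *m adjmx V.
have E : diag_mx d *m Q = Q *m diag_mx d.
  rewrite spec_diagE // -/V /Q !mulmxA -(mulmxA (V *m A) (adjmx V) V) VV mulmx1.
  by rewrite -(mulmxA (V *m M) (adjmx V) V) VV mulmx1 -(mulmxA V A M) -MA mulmxA.
have E' : diag_mx (map_mx f d) *m Q = Q *m diag_mx (map_mx f d).
  by apply: (intertwine E) => j k; rewrite !mxE => ->.
have -> : M = adjmx V *m Q *m V by rewrite /Q !mulmxA VV mul1mx -mulmxA VV mulmx1.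
by rewrite mxfunE -/V -/d !conj_mul // E'.
Qed.

Lemma sqrt_uniq p (Y : 'M[C]_p) : psdmx Y -> sqrtmx (Y *m Y) = Y.
Proof.
move=> pY; have hY := psd_herm pY; set A := Y *m Y.
have hA : herm A by rewrite /herm /A adjmxM hY.
set V := spectralmx A; set d := spectral_diag A.
set W := spectralmx Y; set e := spectral_diag Y.
have uV : V \is unitarymx by apply: spectral_unitarymx.
have uW : W \is unitarymx by apply: spectral_unitarymx.
set Q := V *m adjmx W.
have YE : Y = adjmx W *m diag_mx e *m W by rewrite (specE hY).
have E : diag_mx d *m Q = Q *m diag_mx (\row_k (e 0 k * e 0 k)).
  rewrite spec_diagE // -/V /Q /A {1 2}YE conj_mul // diag_mul.
  rewrite !mulmxA -(mulmxA _ (adjmx V) V) unitary_adjKV // mulmx1.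
  by rewrite -!mulmxA unitary_adjK // mulmx1.
have E' : diag_mx (map_mx sqrtC d) *m Q = Q *m diag_mx e.
  apply: (intertwine E) => j k; rewrite !mxE => ->; rewrite -expr2 sqrCK //.
  by rewrite /e psd_eig.
have QQ : adjmx Q *m Q = 1%:M.
  by rewrite /Q adjmxM adjmxK !mulmxA -(mulmxA W) unitary_adjKV // mulmx1 unitary_adjK.
rewrite /sqrtmx mxfunE -/V -/d.
have -> : V = Q *m W by rewrite /Q -mulmxA unitary_adjKV // mulmx1.
rewrite adjmxM mulmxA -(mulmxA (adjmx W *m adjmx Q)) E'.
by rewrite mulmxA -(mulmxA (adjmx W)) QQ mulmx1 YE.
Qed.

(* A pure basis state, used as the conditional state on blocks of weight 0. *)
Lemma delta_state p (j : 'I_p) : statemx (delta_mx j j : 'M[C]_p).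
Proof.
set B := (delta_mx 0 j : 'M[C]_(1, p)).
have BB : adjmx B *m B = delta_mx j j.
  rewrite (_ : adjmx B = delta_mx j 0) ?mul_delta_mx //.
  by apply/matrixP => a b; rewrite !mxE rmorph_nat andbC.
split; first by rewrite -BB; apply: psd_gram.
rewrite /mxtrace (bigD1 j) //= big1 ?addr0 => [|i ne]; rewrite mxE ?eqxx //.
by rewrite (negbTE ne).
Qed.

End MatrixAnalysis.

(* The tensor factor: kronmx indexes 'I_(n * m) by pairs (a, b) via ix, and
   for u : 'cV_n the matrix embmx u is the map v |-> u (x) v from C^m. *)
Section TensorEmbedding.
Variables (C : numClosedFieldType) (n m : nat).

Definition ix (k : 'I_(n * m)) : 'I_n * 'I_m :=
  enum_val (cast_ord (esym (mxvec_cast n m)) k).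

Lemma ix_inj : injective ix.
Proof. by move=> k l /enum_val_inj/cast_ord_inj. Qed.

Lemma sum_ix (F : 'I_n -> 'I_m -> C) :
  \sum_(k < n * m) F (ix k).1 (ix k).2 = \sum_(a < n) \sum_(b < m) F a b.
Proof.
pose xi (ab : 'I_n * 'I_m) := cast_ord (mxvec_cast n m) (enum_rank ab).
have ixK : cancel ix xi by move=> k; rewrite /ix /xi enum_valK cast_ordKV.
have xiK : cancel xi ix by move=> ab; rewrite /ix /xi cast_ordK enum_rankK.
rewrite (reindex xi); last by exists ix => ab _; rewrite ?xiK ?ixK.
by rewrite pair_big; apply: eq_bigr => -[a b] _; rewrite xiK.
Qed.

Lemma sum_delta p (F : 'I_p -> C) (c : 'I_p) :
  \sum_b ((c == b)%:R * F b) = F c.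
Proof.
rewrite (bigD1 c) //= eqxx mul1r big1 ?addr0 // => b /negbTE.
by rewrite eq_sym => ->; rewrite mul0r.
Qed.

Lemma kronmxE (A : 'M[C]_n) (B : 'M[C]_m) k l :
  kronmx A B k l = A (ix k).1 (ix l).1 * B (ix k).2 (ix l).2.
Proof. by rewrite mxE. Qed.

Definition embmx (u : 'cV[C]_n) : 'M[C]_(n * m, m) :=
  \matrix_(k, b) (u (ix k).1 0 * ((ix k).2 == b)%:R).

Lemma kron_embmx (u : 'cV[C]_n) (B : 'M[C]_m) :
  kronmx (u *m adjmx u) B = embmx u *m B *m adjmx (embmx u).
Proof.
apply/matrixP => k l; rewrite kronmxE !mxE big_ord1 !mxE.
have -> : \sum_j ((embmx u *m B) k j * (adjmx (embmx u)) j l) =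
   \sum_j (((ix l).2 == j)%:R * ((embmx u *m B) k j * (u (ix l).1 0)^*)).
  apply: eq_bigr => j _; rewrite !mxE rmorphM /= [in RHS]mulrC -!mulrA.
  by rewrite rmorph_nat.
rewrite sum_delta mxE.
have -> : \sum_j (embmx u k j * B j (ix l).2) =
          \sum_j (((ix k).2 == j)%:R * (u (ix k).1 0 * B j (ix l).2)).
  by apply: eq_bigr => j _; rewrite !mxE mulrCA mulrA [_ * _%:R]mulrC.
by rewrite sum_delta mulrAC.
Qed.

Lemma embmx_gram (u w : 'cV[C]_n) :
  adjmx (embmx u) *m embmx w = ((adjmx u *m w) 0 0) *: 1%:M.
Proof.
apply/matrixP => b b'; rewrite !mxE.
under eq_bigr => k _ do rewrite !mxE rmorphM /= rmorph_nat mulrACA.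
rewrite (sum_ix (fun a c => ((u a 0)^* * w a 0) * ((c == b)%:R * (c == b')%:R))) /=.
rewrite mulr_suml; apply: eq_bigr => a _; rewrite !mxE -mulr_sumr; congr (_ * _).
by under eq_bigr => c _ do rewrite (eq_sym c); rewrite sum_delta.
Qed.

Lemma embmx_resolution (U : 'M[C]_n) : U *m adjmx U = 1%:M ->
  \sum_i embmx (col i U) *m adjmx (embmx (col i U)) = 1%:M.
Proof.
move=> uU; apply/matrixP => k l; rewrite summxE.
have E i : (embmx (col i U) *m adjmx (embmx (col i U))) k l =
   U (ix k).1 i * (U (ix l).1 i)^* * ((ix k).2 == (ix l).2)%:R.
  rewrite mxE (eq_bigr (fun b => ((ix k).2 == b)%:R *
     (U (ix k).1 i * (U (ix l).1 i)^* * ((ix l).2 == b)%:R))).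
    by rewrite sum_delta eq_sym.
  by move=> b _; rewrite !mxE rmorphM /= rmorph_nat mulrACA mulrCA.
rewrite (eq_bigr _ (fun i _ => E i)) -mulr_suml.
have -> : \sum_i U (ix k).1 i * (U (ix l).1 i)^* = (U *m adjmx U) (ix k).1 (ix l).1.
  by rewrite mxE; apply: eq_bigr => i _; rewrite !mxE.
rewrite uU !mxE -natrM -(inj_eq ix_inj); congr (_%:R).
by case: (ix k) => a b; case: (ix l) => a' b'; rewrite xpair_eqE mulnb.
Qed.

End TensorEmbedding.

Section CoherenceLSM.
Variables (C : numClosedFieldType) (n m : nat) (U : 'M[C]_n) (rho : 'M[C]_(n * m)).
Hypothesis uU : U \is unitarymx.
Hypothesis st_rho : statemx rho.

Definition E i := embmx m (col i U).
Definition P i := locked (E i *m adjmx (E i)).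
Lemma PE i : P i = E i *m adjmx (E i). Proof. by rewrite /P -lock. Qed.

Lemma EE i j : adjmx (E i) *m E j = (i == j)%:R%:M.
Proof.
rewrite /E embmx_gram scalemx1; congr (_%:M).
have -> : (adjmx (col i U) *m col j U) 0 0 = (adjmx U *m U) i j.
  by rewrite !mxE; apply: eq_bigr => a _; rewrite !mxE.
by rewrite unitary_adjKV // mxE.
Qed.

Lemma kronE i B : kronmx (basis_proj U i) B = E i *m B *m adjmx (E i).
Proof. by rewrite /basis_proj kron_embmx. Qed.

Lemma kronP i : kronmx (basis_proj U i) 1%:M = P i.
Proof. by rewrite kronE mulmx1 PE. Qed.

Lemma Psum : \sum_i P i = 1%:M.
Proof. by rewrite (eq_bigr _ (fun i _ => PE i)) embmx_resolution ?unitary_adjK. Qed.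

Lemma P_herm i : adjmx (P i) = P i.
Proof. by rewrite !PE adjmxM adjmxK. Qed.

Lemma EtP i j : adjmx (E i) *m P j = (i == j)%:R *: adjmx (E j).
Proof. by rewrite !PE mulmxA EE mul_scalar_mx. Qed.

Lemma PEi i j : P j *m E i = (i == j)%:R *: E j.
Proof. by rewrite !PE -mulmxA EE eq_sym mul_mx_scalar. Qed.

Lemma PP i : P i *m P i = P i.
Proof. by rewrite {1}PE -mulmxA EtP eqxx scale1r PE. Qed.

Lemma PPn i j : i != j -> P i *m P j = 0.
Proof. by move=> /negbTE ne; rewrite {1}PE -mulmxA EtP ne scale0r mulmx0. Qed.

(* S = sqrt(rho), locked to keep the terms small. *)
Definition S : 'M[C]_(n * m) := locked (sqrtmx rho).
Lemma SE : sqrtmx rho = S. Proof. by rewrite /S -lock. Qed.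
Lemma pS : psdmx S. Proof. by rewrite -SE; apply: psd_sqrt; case: st_rho. Qed.
Lemma hS : adjmx S = S. Proof. by case: pS. Qed.
Lemma SS : S *m S = rho. Proof. by rewrite -SE; apply: sqrt_sqr; case: st_rho. Qed.

Definition block i := adjmx (E i) *m S *m E i.
Lemma p_block i : psdmx (block i).
Proof. by rewrite /block -{2}(adjmxK (E i)); apply: psd_sandwich; apply: pS. Qed.
Lemma h_block i : adjmx (block i) = block i. Proof. by case: (p_block i). Qed.

Definition g i := \tr (S *m P i *m S *m P i).
Definition G := \sum_i g i.

Lemma gE i : g i = \tr (adjmx (block i) *m block i).
Proof.
rewrite h_block /g /block !PE !mulmxA mxtrace_mulC !mulmxA.
by rewrite -!mulmxA; congr (\tr (_ *m _)); rewrite !mulmxA.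
Qed.

Lemma g_ge0 i : 0 <= g i. Proof. by rewrite gE frob_ge0. Qed.
Lemma G_ge0 : 0 <= G. Proof. by apply: sumr_ge0 => i _; apply: g_ge0. Qed.

Definition eta i := eta_of m U rho i.
Definition omega i := omega_of m U rho i.

Lemma etaE i : eta i = \tr (adjmx (adjmx (E i) *m S) *m (adjmx (E i) *m S)).
Proof.
rewrite /eta /eta_of kronP -SS adjmxM adjmxK hS mulmxA (mxtrace_mulC (P i *m S) S) !PE.
by rewrite !mulmxA.
Qed.

Lemma eta0 i : eta i = 0 -> S *m P i *m S = 0.
Proof.
by rewrite etaE => /frob_eq0 E0; rewrite !PE !mulmxA -(mulmxA _ _ S) E0 mulmx0.
Qed.

Lemma eta_omega i : eta i *: omega i = S *m P i *m S.
Proof.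
rewrite /omega /omega_of kronP -/(eta i) SE scalerA.
have [e0|enz] := eqVneq (eta i) 0; first by rewrite e0 mul0r scale0r eta0.
by rewrite mulfV // scale1r.
Qed.

Lemma rho_out : \sum_i eta i *: omega i = rho.
Proof.
rewrite (eq_bigr _ (fun i _ => eta_omega i)) -mulmx_suml -mulmx_sumr Psum mulmx1.
by rewrite SS.
Qed.

(* Since S rho^{-1/2} S = S, the i-th success term is Tr(S P_i S P_i). *)
Lemma lsm_val : lsm_error omega eta = 1 - G.
Proof.
rewrite /lsm_error /= rho_out; congr (_ - _); apply: eq_bigr => i _.
set R := invsqrtmx rho.
have SRS : S *m R *m S = S by rewrite -SE; apply: sqrt_invsqrt; case: st_rho.
have cyc : \tr (R *m (S *m P i *m S) *m R *m (S *m P i *m S)) =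
           \tr ((S *m R *m S) *m P i *m (S *m R *m S) *m P i).
  by rewrite !mulmxA mxtrace_mulC !mulmxA.
rewrite /g -SRS -cyc -eta_omega; move: (omega i) (eta i) => w e.
by rewrite -!scalemxAr -!scalemxAl ?scalerA !mxtraceZ ?mulrA.
Qed.

Definition X := \sum_i P i *m S *m P i.

Lemma hX : adjmx X = X.
Proof. by rewrite /X adjmx_sum; apply: eq_bigr => i _; rewrite !adjmxM P_herm hS mulmxA. Qed.

Lemma XE : X = \sum_i E i *m block i *m adjmx (E i).
Proof. by apply: eq_bigr => i _; rewrite PE /block !mulmxA. Qed.

Lemma pX : psdmx X.
Proof. by rewrite XE; apply: psd_sum => i; apply: psd_sandwich; apply: p_block. Qed.

Lemma PX i : P i *m X = P i *m S *m P i.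
Proof.
rewrite /X mulmx_sumr (bigD1 i) //= big1 ?addr0 => [|j ne]; first by rewrite !mulmxA PP.
by rewrite !mulmxA PPn ?mul0mx // eq_sym.
Qed.

Lemma trXX : \tr (X *m X) = G.
Proof.
rewrite {1}/X mulmx_suml tr_sum; apply: eq_bigr => i _.
rewrite -mulmxA PX /g !mulmxA mxtrace_mulC !mulmxA PP.
by rewrite -!mulmxA mxtrace_mulC !mulmxA.
Qed.

Lemma trSX : \tr (S *m X) = G.
Proof. by rewrite /X mulmx_sumr tr_sum; apply: eq_bigr => i _; rewrite /g !mulmxA. Qed.

Lemma tr_pinching T : (forall i, P i *m T = T *m P i) -> \tr (S *m T) = \tr (X *m T).
Proof.
move=> cT; transitivity (\sum_i \tr (S *m T *m P i)).
  by rewrite -tr_sum -mulmx_sumr Psum mulmx1.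
rewrite /X mulmx_suml tr_sum; apply: eq_bigr => i _; symmetry.
by rewrite -!mulmxA mxtrace_mulC -!mulmxA (mulmxA (P i) T) cT -mulmxA PP.
Qed.

Lemma incoherent_state sigma : partial_incoherent m U sigma ->
  statemx sigma /\ forall j, P j *m sigma = sigma *m P j.
Proof.
case=> pr [sig [pr_ge0 [pr_sum [st_sig ->]]]].
under eq_bigr => i _ do rewrite kronE.
split; first split.
- by apply: psd_sum => i; apply: psd_scale => //; apply: psd_sandwich; case: (st_sig i).
- rewrite tr_sum -pr_sum; apply: eq_bigr => i _.
  rewrite mxtraceZ mxtrace_mulC mulmxA EE eqxx mul1mx.
  by case: (st_sig i) => _ ->; rewrite mulr1.
- move=> j; rewrite mulmx_sumr mulmx_suml; apply: eq_bigr => i _.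
  rewrite -scalemxAr -scalemxAl; congr (_ *: _).
  rewrite !mulmxA PEi -(mulmxA (E i *m sig i)) EtP.
  have [<-|ne] := eqVneq i j; first by rewrite !scale1r.
  by rewrite !scale0r !mul0mx !mulmx0.
Qed.

Lemma affinity_bound sigma : partial_incoherent m U sigma -> (affinity rho sigma) ^+ 2 <= G.
Proof.
case/incoherent_state => -[psig tr_sig] c_sig.
set tau := sqrtmx sigma.
have [htau _] := psd_sqrt psig.
have c_tau j : P j *m tau = tau *m P j by apply: mxfun_comm (c_sig j); case: psig.
rewrite /affinity SE -/tau tr_pinching // -trXX.
by apply: tr_cauchy_schwarz; rewrite ?hX ?sqrt_sqr.
Qed.

(* G > 0, otherwise all blocks of S vanish, so X = 0 and Tr rho = Tr S^2 = 0. *)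
Lemma G_neq0 : G != 0.
Proof.
apply/eqP => G0.
have block0 i : block i = 0.
  by apply: frob_eq0; rewrite -gE; apply: (psumr_eq0P (fun i _ => g_ge0 i) G0).
have X0 : X = 0 by rewrite XE big1 // => i _; rewrite block0 mulmx0 mul0mx.
have trX : \tr X = \tr S.
  rewrite /X tr_sum (eq_bigr (fun i => \tr (P i *m S))); last first.
    by move=> i _; rewrite mxtrace_mulC mulmxA PP.
  by rewrite -tr_sum -mulmx_suml Psum mul1mx.
have S0 : S = 0 by apply: psd_tr0; [apply: pS | rewrite -trX X0 mxtrace0].
by case: st_rho => _; rewrite -SS S0 mul0mx mxtrace0 => /eqP; rewrite eq_sym oner_eq0.
Qed.

Lemma XXE : X *m X = \sum_i E i *m (block i *m block i) *m adjmx (E i).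
Proof.
rewrite {1}/X mulmx_suml; apply: eq_bigr => i _.
by rewrite -mulmxA PX !PE /block !mulmxA.
Qed.

(* The optimal state X X / G is partial incoherent, with probabilities g_i / G
   and conditional states block_i^2 / g_i. *)
Lemma optimal_incoherent : partial_incoherent m U (G^-1 *: (X *m X)).
Proof.
(* 'I_m is inhabited, since Tr rho = 1 forces n * m > 0. *)
have [j0 _] : exists j : 'I_m, true.
  case: (pickP (fun _ : 'I_(n * m) => true)) => [k _|none]; first by exists (ix k).2.
  case: st_rho => _; rewrite /mxtrace big_pred0 // => /eqP.
  by rewrite eq_sym oner_eq0.
pose sq i := block i *m block i.
have p_sq i : psdmx (sq i) by rewrite /sq -{1}h_block; apply: psd_gram.
have tr_sq i : \tr (sq i) = g i by rewrite gE h_block.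
exists (fun i => g i / G),
       (fun i => if g i == 0 then delta_mx j0 j0 else (g i)^-1 *: sq i).
split; first by move=> i; apply: divr_ge0; [apply: g_ge0 | apply: G_ge0].
split; first by rewrite -mulr_suml mulfV ?G_neq0.
split.
  move=> i; case: eqP => [_|/eqP gi]; first exact: delta_state.
  split; first by apply: psd_scale; [rewrite invr_ge0 g_ge0 | apply: p_sq].
  by rewrite mxtraceZ tr_sq mulVf.
rewrite XXE scaler_sumr; apply: eq_bigr => i _; rewrite kronE -/(sq i).
case: eqP => [gi|/eqP gi].
  have sq0 : sq i = 0 by apply: psd_tr0; rewrite ?tr_sq.
  by rewrite gi mul0r !scale0r sq0 mulmx0 mul0mx scaler0.
rewrite -scalemxAr -scalemxAl scalerA; congr (_ *: _).
by rewrite mulrAC mulfV ?mul1r.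
Qed.

(* sqrt(X X / G) = X / sqrt(G), so the optimal affinity is Tr(S X) / sqrt(G). *)
Lemma optimal_affinity : (affinity rho (G^-1 *: (X *m X))) ^+ 2 = G.
Proof.
set c := (sqrtC G)^-1.
have cc : c * c = G^-1 by rewrite /c -expr2 exprVn sqrtCK.
have pY : psdmx (c *: X).
  by apply: psd_scale; [rewrite invr_ge0 sqrtC_ge0 G_ge0 | apply: pX].
have -> : G^-1 *: (X *m X) = (c *: X) *m (c *: X).
  by rewrite -scalemxAr -scalemxAl scalerA cc.
rewrite /affinity SE sqrt_uniq // -scalemxAr mxtraceZ trSX exprMn expr2 cc expr2.
by field; apply: G_neq0.
Qed.

End CoherenceLSM.

Theorem theorem6 (C : numClosedFieldType) (n m : nat) (U : 'M[C]_n)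
  (rho : 'M[C]_(n * m)) :
  U \is unitarymx -> statemx rho ->
  cohA_is m U rho (lsm_error (omega_of m U rho) (eta_of m U rho)).
Proof.
move=> uU st_rho; have := lsm_val uU st_rho; rewrite /omega /eta => ->.
split.
- exists ((G U rho)^-1 *: (X U rho *m X U rho)); split.
  + exact: optimal_incoherent.
  + by rewrite optimal_affinity.
- by move=> sigma inc; rewrite lerD2l lerN2; apply: affinity_bound.
Qed.
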